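(* Consider an instance of the Steiner Team Orienteering Problem and the linear program $\mathcal{L}_2$ as described in the context. Every feasible solution $(x,y,f,\varphi)$ of $\mathcal{L}_2$ satisfies $\sum_{(i,j)\in A}d_{ij}x_{ij}\le mT$.
   Context: An instance of the Steiner Team Orienteering Problem (STOP) consists of: a digraph $G=(N,A)$; an origin $s\in N$ and a destination $t\in N$ with $s\neq t$; disjoint sets $S,P\subseteq N\setminus\{s,t\}$ (mandatory and profitable vertices) with $N=S\cup P\cup\{s,t\}$; rewards $p_i\in\mathbb{Z}^+$ for $i\in P$; traverse times $d_{ij}\in\mathbb{R}^+$ for $(i,j)\in A$; a number $m$ of vehicles and a time limit $T$. For $i\in N$ let $\delta^+(i)=\{j\in N:(i,j)\in A\}$ and $\delta^-(i)=\{j\in N:(j,i)\in A\}$. For $i,j\in N$, $R_{ij}$ denotes the minimum of $\sum_{a\in A_p}d_a$ over all paths $p$ from $i$ to $j$ in $G$ (with arc set $A_p$), and $R_{ii}=0$. $\mathcal{L}_2$ is the linear program: maximize $\sum_{i\in P}p_iy_i$ over $x\in\mathbb{R}^A$, $y\in\mathbb{R}^N$, $f\in\mathbb{R}^A$, $\varphi\in\mathbb{R}$ subject to: $y_i=1$ for all $i\in S\cup\{s,t\}$; $\sum_{j\in\delta^+(i)}x_{ij}=y_i$ for all $i\in S\cup P$; $\sum_{j\in\delta^+(s)}x_{sj}=\sum_{i\in\delta^-(t)}x_{it}=m-\varphi$; $\sum_{i\in\delta^-(s)}x_{is}=\sum_{j\in\delta^+(t)}x_{tj}=0$; $\sum_{j\in\delta^+(i)}x_{ij}-\sum_{j\in\delta^-(i)}x_{ji}=0$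 for all $i\in S\cup P$; $f_{sj}=(T-d_{sj})x_{sj}$ for all $j\in\delta^+(s)$; $\sum_{j\in\delta^-(i)}f_{ji}-\sum_{j\in\delta^+(i)}f_{ij}=\sum_{j\in\delta^+(i)}d_{ij}x_{ij}$ for all $i\in S\cup P$; $f_{ij}\le(T-R_{si}-d_{ij})x_{ij}$ for all $(i,j)\in A$ with $i\neq s$; $f_{ij}\ge R_{jt}x_{ij}$ for all $(i,j)\in A$; $0\le x\le1$, $0\le y\le 1$, $f\ge0$, $0\le\varphi\le m$. (It is the linear relaxation of the integer formulation $\mathcal{F}_2$ in which $x,y$ are binary.) *)

From HB Require Import structures.
From mathcomp Require Import all_boot all_order all_algebra.
From mathcomp Require Import all_classical all_reals ereal.
Set Implicit Arguments. Unset Strict Implicit. Unset Printing Implicit Defensive.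
Import Order.TTheory GRing.Theory Num.Theory.
Local Open Scope ring_scope.

(* A path from i is a vertex sequence [:: i, v1, ..., vk] such that
   consecutive vertices are joined by arcs (path A i [:: v1; ...; vk]). *)

Fixpoint path_time (R : numDomainType) (N : finType) (d : N -> N -> R)
    (i : N) (q : seq N) : R :=
  match q with
  | [::] => 0
  | j :: q' => d i j + path_time d j q'
  end.

(* R_ij: minimum traverse time of a path from i to j in G, with R_ii = 0.
   Taken as an extended real: the infimum over all paths from i to j
   (= +oo if j is not reachable from i). *)
Definition Rdist (R : realType) (N : finType) (A : rel N) (d : N -> N -> R)
    (i j : N) : \bar R :=
  if i == j then 0%E
  else ereal_inf [set (path_time d i q)%:E | q in
                  [set q : seq N | path A i q /\ last i q = j]].

(* Feasibility for the linear program L_2. The variable vectors x, f in R^A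
   and y in R^N are modelled as functions; only their values on arcs
   (resp. vertices) are constrained. *)
Definition L2_feasible (R : realType) (N : finType) (A : rel N) (s t : N)
    (S P : {set N}) (d : N -> N -> R) (m : nat) (T : R)
    (x : N -> N -> R) (y : N -> R) (f : N -> N -> R) (phi : R) : Prop :=
  (forall i, (i \in S) || (i == s) || (i == t) -> y i = 1) /\
  (forall i, (i \in S) || (i \in P) -> \sum_(j | A i j) x i j = y i) /\
  \sum_(j | A s j) x s j = m%:R - phi /\ \sum_(i | A i t) x i t = m%:R - phi /\
  \sum_(i | A i s) x i s = 0 /\ \sum_(j | A t j) x t j = 0 /\
  (forall i, (i \in S) || (i \in P) ->
      \sum_(j | A i j) x i j - \sum_(j | A j i) x j i = 0) /\
  (forall j, A s j -> f s j = (T - d s j) * x s j) /\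
  (forall i, (i \in S) || (i \in P) ->
      \sum_(j | A j i) f j i - \sum_(j | A i j) f i j
      = \sum_(j | A i j) d i j * x i j) /\
  (forall i j, A i j -> i != s ->
      ((f i j)%:E <= ((T - d i j)%:E - Rdist A d s i) * (x i j)%:E)%E) /\
  (forall i j, A i j -> (Rdist A d j t * (x i j)%:E <= (f i j)%:E)%E) /\
  (forall i j, A i j -> 0 <= x i j <= 1) /\
  (forall i, 0 <= y i <= 1) /\
  (forall i j, A i j -> 0 <= f i j) /\
  0 <= phi <= m%:R.

(* Summed over all vertices, the net inflow of f vanishes, since both the
   total inflow and the total outflow are the sum of f over all arcs.  On the
   vertices of S and P the net inflow of f equals the weighted outflow
   sum_j d_ij x_ij, so the total travel time is the travel time leaving s plus
   the net outflow of f at s and t.  At t nothing leaves (x_tj = 0 and hence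
   f_tj = 0), and at s the arcs satisfy d_sj x_sj + f_sj = T x_sj, which sums
   to T (m - phi) <= m T. *)
From HB Require Import structures.
From mathcomp Require Import all_boot all_order all_algebra.
From mathcomp Require Import all_classical all_reals ereal.
From mathcomp Require Import lra.
Set Implicit Arguments. Unset Strict Implicit. Unset Printing Implicit Defensive.
Import Order.TTheory GRing.Theory Num.Theory.
Local Open Scope ring_scope.

Section ArcFlows.
Variables (R : numDomainType) (N : finType) (A : rel N).

Definition inflow (g : N -> N -> R) (i : N) : R := \sum_(j | A j i) g j i.
Definition outflow (g : N -> N -> R) (i : N) : R := \sum_(j | A i j) g i j.

Lemma sum_inflow (g : N -> N -> R) : \sum_i inflow g i = \sum_i outflow g i.
Proof.
rewrite /inflow /outflow.
under eq_bigr do rewrite big_mkcond.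
under [RHS]eq_bigr do rewrite big_mkcond.
by rewrite exchange_big.
Qed.

Lemma bigD2 (F : N -> R) (s t : N) : s != t ->
  \sum_i F i = F s + F t + \sum_(i | (i != s) && (i != t)) F i.
Proof.
move=> neq_st; rewrite (bigD1 s) //= (bigD1 t) /=; last by rewrite eq_sym.
by rewrite addrA.
Qed.

Lemma sum_net_inflow_except2 (g : N -> N -> R) (s t : N) : s != t ->
  \sum_(i | (i != s) && (i != t)) (inflow g i - outflow g i)
  = (outflow g s - inflow g s) + (outflow g t - inflow g t).
Proof.
move=> neq_st.
have net0 : \sum_i (inflow g i - outflow g i) = 0.
  by rewrite sumrB sum_inflow subrr.
move: net0; rewrite (bigD2 _ neq_st) => /eqP; rewrite addrC addr_eq0 => /eqP->.
by rewrite opprD !opprB.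
Qed.

Lemma inflow_ge0 (g : N -> N -> R) :
  (forall i j, A i j -> 0 <= g i j) -> forall i, 0 <= inflow g i.
Proof. by move=> g_ge0 i; apply: sumr_ge0 => j /g_ge0. Qed.

End ArcFlows.

Theorem proposition1 (R : realType) (N : finType) (A : rel N) (s t : N)
    (S P : {set N}) (p : N -> nat) (d : N -> N -> R) (m : nat) (T : R)
    (hst : s != t)
    (hSP : [disjoint S & P])
    (hs : (s \notin S) && (s \notin P)) (ht : (t \notin S) && (t \notin P))
    (hN : forall i, [|| i \in S, i \in P, i == s | i == t])
    (hp : forall i, i \in P -> (0 < p i)%N)
    (hd : forall i j, A i j -> 0 < d i j)
    (hT : 0 <= T)
    (x : N -> N -> R) (y : N -> R) (f : N -> N -> R) (phi : R) :
  L2_feasible A s t S P d m T x y f phi ->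
  \sum_(i : N) \sum_(j | A i j) d i j * x i j <= m%:R * T.
Proof.
move=> [_ [_ [x_out_s [_ [_ [x_out_t [_ [f_out_s [f_flow
  [f_ub [_ [x01 [_ [f_ge0 phi_bounds]]]]]]]]]]]]]].
case/andP: phi_bounds => phi_ge0 _.
pose dx i j := d i j * x i j.
have x_t0 j : A t j -> x t j = 0.
  by apply: (psumr_eq0P _ x_out_t) => k /x01 /andP[].
have dx_t : outflow A dx t = 0.
  by rewrite /outflow big1 // => j Atj; rewrite /dx x_t0 // mulr0.
have f_t : outflow A f t = 0.
  rewrite /outflow big1 // => j Atj; apply/eqP; rewrite eq_le f_ge0 // andbT.
  by have := f_ub t j Atj; rewrite eq_sym hst x_t0 // mule0 lee_fin; apply.
have dx_f_s : outflow A dx s + outflow A f s = T * (m%:R - phi).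
  rewrite -x_out_s /outflow -big_split mulr_sumr; apply: eq_bigr => j Asj.
  by rewrite /dx /= f_out_s // -mulrDl subrKC.
have dx_inner : \sum_(i | (i != s) && (i != t)) outflow A dx i
                = \sum_(i | (i != s) && (i != t)) (inflow A f i - outflow A f i).
  apply: eq_bigr => i /andP[/negbTE i_s /negbTE i_t]; rewrite f_flow //.
  by move: (hN i); rewrite i_s i_t !orbF.
have := inflow_ge0 f_ge0 s; have := inflow_ge0 f_ge0 t.
have := mulr_ge0 hT phi_ge0.
rewrite (bigD2 (outflow A dx) hst) dx_inner sum_net_inflow_except2 // dx_t f_t.
move: dx_f_s; clear -hT; lra.
Qed.
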